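(* Let $\Sigma=\{0,1\}$. Define $\delta:\Sigma^*\times\Sigma^*\to\mathbb{Z}_{\ge0}$ by $\delta(u,v)=d_2(u,v)$ for $u,v\ne\varepsilon$, and $\delta(u,\varepsilon)=\delta(\varepsilon,u)$ given by $\delta(\varepsilon,\varepsilon)=0$, $\delta(000,\varepsilon)=1$, and $\delta(u,\varepsilon)=d_2(u,000)$ for $u\notin\{\varepsilon,000\}$. Then $\delta$ is an integer-valued Hamming compatible metric on $\Sigma^*$ which is not weakly uniform, and $\delta(000,\varepsilon)=1<2=d_2(000,\varepsilon)$.
   Context: $\Sigma^*$ is the set of all finite words over $\Sigma$, $l(u)$ the length of $u$, $\varepsilon$ the empty word, $H$ the Hamming distance between equal-length words. For arbitrary $x,y$, if $l(x)\ge l(y)$, $\underline{x}$ is the prefix of $x$ of length $l(y)$ and $\underline{y}=y$ (symmetrically otherwise). $d_2(x,y)=H(\underline{x},\underline{y})+\lceil |l(x)-l(y)|/2\rceil$ (a metric on $\Sigma^*$). A metric $\delta$ is Hamming compatible if $\delta(x,y)=H(x,y)$ whenever $l(x)=l(y)$. Two words of the same length $n$ are Hamming opposites if their Hamming distance is $n$; $\delta$ is weakly uniform if $\delta(x,\varepsilon)=\delta(y,\varepsilon)$ for all Hamming opposites $x,y$. *)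

(* Words over Sigma = {0,1} are  seq bool  (false = 0, true = 1). *)
From mathcomp Require Import all_boot.
Set Implicit Arguments. Unset Strict Implicit. Unset Printing Implicit Defensive.

Definition word := seq bool.

(* Hamming distance: number of positions where the words differ
   (only meaningful / only used for words of equal length). *)
Definition hamming (x y : word) : nat :=
  count (fun p : bool * bool => p.1 != p.2) (zip x y).

(* d_2(x,y) = H(prefixes of common length) + ceil(|l(x)-l(y)|/2). *)
Definition d2 (x y : word) : nat :=
  let m := minn (size x) (size y) in
  hamming (take m x) (take m y)
  + uphalf ((size x - size y) + (size y - size x)).

Definition w000 : word := [:: false; false; false].

Definition delta_eps (u : word) : nat :=
  if u == [::] then 0 else if u == w000 then 1 else d2 u w000.

Definition delta (u v : word) : nat :=
  if v == [::] then delta_eps u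
  else if u == [::] then delta_eps v
  else d2 u v.

Definition is_metric (d : word -> word -> nat) : Prop :=
  (forall x y, d x y = 0 <-> x = y) /\
  (forall x y, d x y = d y x) /\
  (forall x y z, d x z <= d x y + d y z).

Definition hamming_compatible (d : word -> word -> nat) : Prop :=
  forall x y, size x = size y -> d x y = hamming x y.

Definition hamming_opposites (x y : word) : Prop :=
  size x = size y /\ hamming x y = size x.

Definition weakly_uniform (d : word -> word -> nat) : Prop :=
  forall x y, hamming_opposites x y -> d x [::] = d y [::].

From mathcomp Require Import all_boot.
From mathcomp Require Import zify.

(* Proof strategy.
   1. d2 is itself a metric on all words: on words a :: x, b :: y it
      peels off one Hamming letter, d2 (a :: x) (b :: y) = (a != b) + d2 x y,
      and against the empty word it is uphalf of the length; the triangle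
      inequality then follows by induction, the cases involving the empty
      word being handled by length bounds on d2.  On words of equal length
      d2 is the Hamming distance.
   2. A general construction: given a metric d and a "distance to the
      empty word" e that vanishes only at the empty word and satisfies, on
      nonempty words, |e u - e v| <= d u v <= e u + e v, redefining the
      distances to the empty word by e yields again a metric.
   3. delta is this construction for d = d2 and e u = max 1 (d2 u 000)
      (for nonempty u), which is 1-Lipschitz for d2; hence delta is a
      metric.  It equals d2 between nonempty words, so it is Hamming
      compatible, and the Hamming opposites 000, 111 are at delta-distance
      1 and 3 from the empty word, so delta is not weakly uniform. *)

Lemma uphalf_bounds n : n <= 2 * uphalf n <= n + 1.
Proof.
have half_spec : (n <= 2 * uphalf n <= n + 1) /\ (2 * half n <= n <= 2 * half n + 1).
  by elim: n => [|n [IH1 IH2]] //=; lia.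
by case: half_spec.
Qed.

(* The length defect term of d2, written |l(x) - l(y)| with truncated
   subtractions. *)
Notation size_gap x y := (size x - size y + (size y - size x)).

Lemma d2_nil_l y : d2 [::] y = uphalf (size y).
Proof. by rewrite /d2 /= min0n take0 sub0n subn0 /hamming; case: y. Qed.

Lemma d2_nil_r x : d2 x [::] = uphalf (size x).
Proof. by rewrite /d2 /= minn0 take0 sub0n subn0 addn0 /hamming; case: x. Qed.

Lemma d2_cons a b x y : d2 (a :: x) (b :: y) = (a != b) + d2 x y.
Proof. by rewrite /d2 /= minnSS !subSS addnA. Qed.

(* d2 lies between its length term and the length term plus the common
   length; these bounds handle the triangle cases through the empty word. *)
Lemma d2_lower x y : uphalf (size_gap x y) <= d2 x y.
Proof.
elim: x y => [|a x IH] [|b y];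
  rewrite ?d2_nil_l ?d2_nil_r ?d2_cons /= ?subn0 ?sub0n ?addn0 //.
by rewrite !subSS; have := IH y; lia.
Qed.

Lemma d2_upper x y : d2 x y <= minn (size x) (size y) + uphalf (size_gap x y).
Proof.
elim: x y => [|a x IH] [|b y];
  rewrite ?d2_nil_l ?d2_nil_r ?d2_cons /= ?subn0 ?sub0n ?addn0 ?min0n ?minn0 //.
by rewrite !subSS minnSS; have := IH y; case: (a != b) => /=; lia.
Qed.

Lemma d2_sym x y : d2 x y = d2 y x.
Proof.
elim: x y => [|a x IH] [|b y]; rewrite ?d2_nil_l ?d2_nil_r ?d2_cons //.
by rewrite IH eq_sym.
Qed.

Lemma d2_eq0 x y : d2 x y = 0 <-> x = y.
Proof.
split; last by move=> ->; elim: y => [|b y IH]; rewrite ?d2_nil_l ?d2_cons ?eqxx.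
elim: x y => [|a x IH] [|b y]; rewrite ?d2_nil_l ?d2_nil_r ?d2_cons //=.
by case: (a =P b) => [->|//] /= /IH ->.
Qed.

Lemma d2_triangle x y z : d2 x z <= d2 x y + d2 y z.
Proof.
elim: x y z => [|a x IH] [|b y] [|c z]; rewrite ?d2_nil_l ?d2_nil_r //.
- have := d2_lower (b :: y) (c :: z).
  have := uphalf_bounds (size (c :: z)); have := uphalf_bounds (size (b :: y)).
  have := uphalf_bounds (size_gap (b :: y) (c :: z)); lia.
- lia.
- have := d2_upper (a :: x) (c :: z).
  have := uphalf_bounds (size (c :: z)); have := uphalf_bounds (size (a :: x)).
  have := uphalf_bounds (size_gap (a :: x) (c :: z)); lia.
- have := d2_lower (a :: x) (b :: y).
  have := uphalf_bounds (size (a :: x)); have := uphalf_bounds (size (b :: y)).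
  have := uphalf_bounds (size_gap (a :: x) (b :: y)); lia.
- by rewrite !d2_cons; have := IH y z; case: a; case: b; case: c => /=; lia.
Qed.

Lemma d2_metric : is_metric d2.
Proof. by split; [exact: d2_eq0 | split; [exact: d2_sym | exact: d2_triangle]]. Qed.

Lemma d2_hamming x y : size x = size y -> d2 x y = hamming x y.
Proof. by move=> sxy; rewrite /d2 sxy minnn subnn addn0 take_size -sxy take_size addn0. Qed.

Section AdjoinNil.

Variables (d : word -> word -> nat) (e : word -> nat).

Definition adjoin_nil (u v : word) : nat :=
  if v == [::] then e u else if u == [::] then e v else d u v.

Hypothesis d_is_metric : is_metric d.
Hypothesis e_eq0 : forall u, e u = 0 <-> u = [::].
Hypothesis e_lipschitz : forall u v, u != [::] -> v != [::] -> e u <= e v + d u v.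
Hypothesis d_via_nil : forall u v, u != [::] -> v != [::] -> d u v <= e u + e v.

(* The modified distance is again a metric: e plays the role of a point
   at distance e u from every nonempty u, consistently with d. *)
Lemma adjoin_nil_metric : is_metric adjoin_nil.
Proof.
have [d_eq0 [d_sym d_tri]] := d_is_metric.
split; [|split].
- move=> [|a x] [|b y]; rewrite /adjoin_nil //= ?e_eq0 //; exact: d_eq0.
- by move=> [|a x] [|b y]; rewrite /adjoin_nil //=.
- have e_nil : e [::] = 0 by apply/e_eq0.
  move=> [|a x] [|b y] [|c z]; rewrite /adjoin_nil /= ?e_nil ?add0n ?addn0 //.
  + by rewrite d_sym; apply: e_lipschitz.
  + exact: d_via_nil.
  + by rewrite addnC; apply: e_lipschitz.
Qed.

End AdjoinNil.

(* Away from the empty word, delta_eps is max 1 (d2 u 000), which is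
   1-Lipschitz for d2 because u |-> d2 u 000 is. *)
Lemma delta_eps_nonempty u : u != [::] -> delta_eps u = maxn 1 (d2 u w000).
Proof.
move=> u_ne; rewrite /delta_eps (negbTE u_ne).
case: (eqVneq u w000) => [->|u_ne000] //.
have : d2 u w000 <> 0 by move/d2_eq0 => e; rewrite e eqxx in u_ne000.
lia.
Qed.

Lemma delta_eps_eq0 u : delta_eps u = 0 <-> u = [::].
Proof.
split=> [|-> //]; case: (eqVneq u [::]) => // u_ne.
by rewrite delta_eps_nonempty //; lia.
Qed.

Lemma delta_eps_lipschitz u v :
  u != [::] -> v != [::] -> delta_eps u <= delta_eps v + d2 u v.
Proof.
move=> u_ne v_ne; rewrite !delta_eps_nonempty //.
have := d2_triangle u v w000; lia.
Qed.

Lemma d2_via_delta_eps u v :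
  u != [::] -> v != [::] -> d2 u v <= delta_eps u + delta_eps v.
Proof.
move=> u_ne v_ne; rewrite !delta_eps_nonempty //.
have := d2_triangle u w000 v; rewrite (d2_sym w000 v); lia.
Qed.

Lemma delta_metric : is_metric delta.
Proof.
exact (adjoin_nil_metric d2 delta_eps d2_metric delta_eps_eq0
         delta_eps_lipschitz d2_via_delta_eps).
Qed.

(* Equal-length words are either both empty or both nonempty, and on
   nonempty words delta is d2. *)
Lemma delta_hamming_compatible : hamming_compatible delta.
Proof.
move=> [|a x] [|b y] //= sxy.
by rewrite /delta /= d2_hamming //= sxy.
Qed.

(* 000 and 111 are Hamming opposites at delta-distances 1 and 3 from the
   empty word. *)
Lemma delta_not_weakly_uniform : ~ weakly_uniform delta.
Proof.
by move=> /(_ w000 [:: true; true; true]) /(_ (conj erefl erefl)).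
Qed.

Theorem mainTheorem11 :
  is_metric delta /\ hamming_compatible delta /\ ~ weakly_uniform delta /\
  delta w000 [::] = 1 /\ d2 w000 [::] = 2.
Proof.
split; first exact: delta_metric.
split; first exact: delta_hamming_compatible.
by split; first exact: delta_not_weakly_uniform.
Qed.
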